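(* Let $C$ be an $(n,k)$-code with generator matrix $G$ and let $A_1,\dots,A_\ell\subseteq[n]$. For all $B\subseteq\bar A_1\cup\dots\cup\bar A_\ell$, $\operatorname{rank}\mathcal H_{A_1,\dots,A_\ell}[G]\ge|B|+\operatorname{rank}\mathcal H_{A_1\setminus B,\dots,A_\ell\setminus B}[G|_{\bar B}]$, where in the second term the column index set is $[n]\setminus B$ (so complements are taken in $[n]\setminus B$).
   Context: For a $k\times N$ matrix $G$ with columns indexed by a set $U$, $A\subseteq U$, $G|_A$ is the submatrix of columns in $A$ and $\bar A=U\setminus A$. $\mathcal H_{A_1,\dots,A_\ell}[G]$ is the $(|U|+\ell k)\times\sum_i|\bar A_i|$ block matrix whose first block row is $(I_U|_{\bar A_1},\dots,I_U|_{\bar A_\ell})$ ($I_U$ the identity matrix indexed by $U$) and below which is the block-diagonal matrix $\operatorname{diag}(G|_{\bar A_1},\dots,G|_{\bar A_\ell})$. *)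

From HB Require Import structures.
From mathcomp Require Import all_boot all_order all_algebra all_field.
Set Implicit Arguments. Unset Strict Implicit. Unset Printing Implicit Defensive.
Import GRing.Theory.
Local Open Scope ring_scope.

(* Rank of a matrix whose rows and columns are indexed by arbitrary finite
   types (the ordering chosen by enum does not affect the rank). *)
Definition fmxrank (F : fieldType) (Rw Cl : finType) (f : Rw -> Cl -> F) : nat :=
  \rank (\matrix_(i < #|{: Rw}|, j < #|{: Cl}|) f (enum_val i) (enum_val j)).

(* Row index type of H_{A_1..A_l}[G] with column universe U :
   U (identity block)  +  l copies of the k rows of G. *)
Definition Hrow (n k l : nat) (U : {set 'I_n}) : finType :=
  ({x : 'I_n | x \in U} + ('I_l * 'I_k))%type.

Definition Hcol (n l : nat) (U : {set 'I_n}) (A : 'I_l -> {set 'I_n}) : finType :=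
  {p : 'I_l * 'I_n | (p.2 \in U) && (p.2 \notin A p.1)}.

(* Entries of H_{A_1,...,A_l}[G|_U]: first block row (I_U|_{bar A_1}, ...,
   I_U|_{bar A_l}), below it diag(G|_{bar A_1}, ..., G|_{bar A_l}),
   where complements are taken inside U. *)
Definition Hentry (F : fieldType) (n k l : nat) (G : 'M[F]_(k, n))
  (U : {set 'I_n}) (A : 'I_l -> {set 'I_n})
  (r : Hrow k l U) (c : Hcol U A) : F :=
  match r with
  | inl x => ((val x == (val c).2) : nat)%:R
  | inr (i, t) => if i == (val c).1 then G t (val c).2 else 0
  end.

Definition rankH (F : fieldType) (n k l : nat) (G : 'M[F]_(k, n))
  (U : {set 'I_n}) (A : 'I_l -> {set 'I_n}) : nat :=
  fmxrank (@Hentry F n k l G U A).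

From HB Require Import structures.
From mathcomp Require Import all_boot all_order all_algebra all_field.
Set Implicit Arguments. Unset Strict Implicit. Unset Printing Implicit Defensive.
Import GRing.Theory.
Local Open Scope ring_scope.

(* Each b in B labels, by hypothesis, a column (i, b) of H_A[G] with b outside
   A_i.  Relabel the rows and columns of H_{A\B}[G|_{~B}] as rows and columns
   of H_A[G]; since its column labels avoid B, the identity-block rows indexed
   by B vanish on them and meet the |B| chosen columns in an identity matrix.
   This gives a submatrix of H_A[G] of shape [[1, 0], [X, Z]] with Z the
   relabelled H_{A\B}[G|_{~B}], and such a matrix has rank |B| + rank Z. *)

Lemma fmxrank_ge_mxsub (F : fieldType) (Rw Cl : finType) (f : Rw -> Cl -> F)
    m p (r : 'I_m -> Rw) (c : 'I_p -> Cl) :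
  (\rank (\matrix_(i, j) f (r i) (c j)) <= fmxrank f)%N.
Proof.
set M := \matrix_(i < #|{: Rw}|, j < #|{: Cl}|) f (enum_val i) (enum_val j).
have -> : \matrix_(i, j) f (r i) (c j) =
    mxsub (enum_rank \o r) (enum_rank \o c) M.
  by apply/matrixP => i j; rewrite !mxE /= !enum_rankK.
rewrite mxsubrc rowsubE; apply: leq_trans (mxrankM_maxr _ _) _.
rewrite -mxrank_tr trmx_mxsub rowsubE.
by apply: leq_trans (mxrankM_maxr _ _) _; rewrite mxrank_tr.
Qed.

Lemma mxrank_block_id0 (F : fieldType) m1 m2 n2
    (X : 'M[F]_(m2, m1)) (Z : 'M[F]_(m2, n2)) :
  \rank (block_mx 1%:M 0 X Z) = (m1 + \rank Z)%N.
Proof.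
set E := block_mx 1%:M 0 (- X) 1%:M.
have E_unit : E \in unitmx by rewrite unitmxE det_lblock !det1 mulr1 unitr1.
have EM : E *m block_mx 1%:M 0 X Z = block_mx 1%:M 0 0 Z.
  by rewrite mulmx_block !mul1mx !mul0mx !mulmx0 !mulmx1 addNr !addr0 add0r.
rewrite -[m1 in RHS](mxrank1 F) -rank_diag_block_mx -EM.
by rewrite (eqmxMfull _ (etrans (row_full_unit E) E_unit)).
Qed.

Section Puncturing.

Variables (F : fieldType) (n k l : nat) (G : 'M[F]_(k, n)).
Variables (A : 'I_l -> {set 'I_n}) (B : {set 'I_n}).

Local Notation AB := (fun i => A i :\: B).

Definition punct_row (x : Hrow k l (~: B)) : Hrow k l setT :=
  match x with
  | inl y => inl (exist _ (val y) (in_setT (val y)))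
  | inr p => inr p
  end.

Lemma punct_colP (y : Hcol (~: B) AB) :
  ((val y).2 \in setT) && ((val y).2 \notin A (val y).1).
Proof.
case: y => [[i u]] /= /andP[]; rewrite in_setT in_setC in_setD negb_and negbK.
by move=> /negPf uB; rewrite uB.
Qed.

Definition punct_col (y : Hcol (~: B) AB) : Hcol setT A :=
  exist _ (val y) (punct_colP y).

Lemma Hentry_punct x y :
  Hentry G (punct_row x) (punct_col y) = Hentry G x y.
Proof. by case: x => [x|[i t]]. Qed.

Lemma Hentry_punct_col_out (b : 'I_n) (bT : b \in setT) y :
  b \in B -> Hentry G (inl (exist _ b bT)) (punct_col y) = 0.
Proof.
case: y => [[i u]] /= /andP[uB _] bB; rewrite /Hentry /=.
by case: eqP => // bu; rewrite -bu in_setC bB in uB.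
Qed.

Hypothesis HB : B \subset \bigcup_(i < l) ~: A i.

Lemma exists_Hcol_at (b : 'I_n) : b \in B -> exists c : Hcol setT A, (val c).2 = b.
Proof.
move=> /(subsetP HB) /bigcupP[i _]; rewrite in_setC => bAi.
have cP : ((i, b).2 \in setT) && ((i, b).2 \notin A (i, b).1) by rewrite in_setT.
by exists (exist _ (i, b) cP).
Qed.

Lemma rankH_puncture : (#|B| + rankH G (~: B) AB <= rankH G setT A)%N.
Proof.
have /fin_all_exists[cB cBE] : forall j : 'I_#|B|,
    exists c : Hcol setT A, (val c).2 = enum_val j.
  by move=> j; apply: exists_Hcol_at; apply: enum_valP.
pose r (i : 'I_(#|B| + #|{: Hrow k l (~: B)}|)) : Hrow k l setT := match split i with
  | inl j => inl (exist _ (enum_val j) (in_setT _))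
  | inr j => punct_row (enum_val j) end.
pose c (i : 'I_(#|B| + #|{: Hcol (~: B) AB}|)) : Hcol setT A := match split i with
  | inl j => cB j
  | inr j => punct_col (enum_val j) end.
pose M := \matrix_(i < #|B| + #|{: Hrow k l (~: B)}|,
                   j < #|B| + #|{: Hcol (~: B) AB}|) Hentry G (r i) (c j).
pose Z := \matrix_(i < #|{: Hrow k l (~: B)}|, j < #|{: Hcol (~: B) AB}|)
  Hentry G (enum_val i) (enum_val j).
have M_ul : ulsubmx M = 1%:M.
  apply/matrixP => i j; rewrite !mxE /r /c !(unsplitK (inl _)) /= cBE.
  by rewrite (inj_eq enum_val_inj).
have M_ur : ursubmx M = 0.
  apply/matrixP => i j; rewrite !mxE /r /c (unsplitK (inl _)) (unsplitK (inr _)).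
  by rewrite Hentry_punct_col_out ?enum_valP.
have M_dr : drsubmx M = Z.
  by apply/matrixP => i j; rewrite !mxE /r /c !(unsplitK (inr _)) Hentry_punct.
have -> : (#|B| + rankH G (~: B) AB)%N = \rank M.
  by rewrite -(submxK M) M_ul M_ur M_dr mxrank_block_id0.
exact: fmxrank_ge_mxsub.
Qed.

End Puncturing.

Theorem proposition3p13 (F : finFieldType) (n k l : nat) (G : 'M[F]_(k, n))
  (HG : \rank G = k) (A : 'I_l -> {set 'I_n}) (B : {set 'I_n})
  (HB : B \subset \bigcup_(i < l) ~: A i) :
  (rankH G setT A >= #|B| + rankH G (~: B) (fun i => A i :\: B))%N.
Proof.
exact: rankH_puncture HB.
Qed.
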